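(* In the Ornstein–Uhlenbeck setting described in the context, the optimal intervention boundaries satisfy: as functions of $c_1$ (all other parameters fixed), $c_1\mapsto a^*(c_1)$ is decreasing and $c_1\mapsto b^*(c_1)$ is increasing; as functions of $c_2$ (all other parameters fixed), $c_2\mapsto a^*(c_2)$ is decreasing and $c_2\mapsto b^*(c_2)$ is increasing.
   Context: Fix parameters $r>0$, $\rho>0$, $m\in\mathbb{R}$, $\sigma>0$, $\theta\in\mathbb{R}$ and constant marginal intervention costs $c_1,c_2\in\mathbb{R}$ with $c_1+c_2>0$ (the parameters are varied only within this range). The (log-)exchange rate controlled by $\nu=\xi-\eta$ (difference of two nondecreasing adapted left-continuous processes started at $0$, with increments on disjoint sets) evolves as $dX_t=\rho(m-X_t)dt+\sigma dB_t+d\xi_t-d\eta_t$, $X_0=x\in\mathbb{R}$, where $B$ is a Brownian motion. The central bank minimizes over admissible controls $\mathbb{E}_x[\int_0^\infty e^{-rs}\tfrac12(X_s-\theta)^2ds+c_1\int_0^\infty e^{-rs}d\xi_s+c_2\int_0^\infty e^{-rs}d\eta_s]$ (jumps included). Let $D_\alpha(y)=\frac{e^{-y^2/4}}{\Gamma(-\alpha)}\int_0^\infty t^{-\alpha-1}e^{-t^2/2-yt}dt$ ($\alpha<0$), $\widehat\phi(x)=e^{\rho(x-m)^2/(2\sigma^2)}D_{-(r+\rho)/\rho}\big(\tfrac{(x-m)\sqrt{2\rho}}{\sigma}\big)$, $\widehat\psi(x)=e^{\rho(x-m)^2/(2\sigma^2)}D_{-(r+\rho)/\rho}\big(-\tfrac{(x-m)\sqrt{2\rho}}{\sigma}\big)$,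 $\widehat m'(z)=\frac{2}{\sigma^2}e^{-\rho(z-m)^2/\sigma^2}$. The optimal intervention boundaries $a^*<b^*$ are the unique pair with $a^*<\theta-(r+\rho)c_1$ and $b^*>\theta+(r+\rho)c_2$ solving $\int_a^b(z-\theta+(r+\rho)c_1)\widehat m'\widehat\phi\,dz=-(r+\rho)(c_1+c_2)\int_b^\infty\widehat m'\widehat\phi\,dz$ and $\int_a^b(z-\theta-(r+\rho)c_2)\widehat m'\widehat\psi\,dz=(r+\rho)(c_1+c_2)\int_{-\infty}^a\widehat m'\widehat\psi\,dz$; the optimal policy keeps $X$ in $[a^*,b^*]$ by minimal reflection. *)

From Stdlib Require Import Reals.
From Coquelicot Require Import Coquelicot.
Open Scope R_scope.

Definition int_0_inf (f : R -> R) : R :=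
  RInt_gen f (at_point 0) (Rbar_locally p_infty).

Definition Gamma_fn (s : R) : R :=
  int_0_inf (fun t => Rpower t (s - 1) * exp (- t)).

(* Parabolic cylinder function, integral representation (alpha < 0):
   D_alpha(y) = e^{-y^2/4}/Gamma(-alpha) int_0^oo t^{-alpha-1} e^{-t^2/2 - y t} dt *)
Definition D_pc (alpha y : R) : R :=
  exp (- y ^ 2 / 4) / Gamma_fn (- alpha) *
  int_0_inf (fun t => Rpower t (- alpha - 1) * exp (- t ^ 2 / 2 - y * t)).

Definition phi_hat (r rho m sigma x : R) : R :=
  exp (rho * (x - m) ^ 2 / (2 * sigma ^ 2)) *
  D_pc (- (r + rho) / rho) ((x - m) * sqrt (2 * rho) / sigma).

Definition psi_hat (r rho m sigma x : R) : R :=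
  exp (rho * (x - m) ^ 2 / (2 * sigma ^ 2)) *
  D_pc (- (r + rho) / rho) (- ((x - m) * sqrt (2 * rho) / sigma)).

Definition m_hat_d (rho m sigma z : R) : R :=
  2 / sigma ^ 2 * exp (- rho * (z - m) ^ 2 / sigma ^ 2).

Definition OptBoundaries (r rho m sigma theta c1 c2 a b : R) : Prop :=
  a < theta - (r + rho) * c1 /\
  theta + (r + rho) * c2 < b /\
  RInt (fun z => (z - theta + (r + rho) * c1) * m_hat_d rho m sigma z
                   * phi_hat r rho m sigma z) a b
  = - (r + rho) * (c1 + c2) *
    RInt_gen (fun z => m_hat_d rho m sigma z * phi_hat r rho m sigma z)
             (at_point b) (Rbar_locally p_infty) /\
  RInt (fun z => (z - theta - (r + rho) * c2) * m_hat_d rho m sigma z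
                   * psi_hat r rho m sigma z) a b
  = (r + rho) * (c1 + c2) *
    RInt_gen (fun z => m_hat_d rho m sigma z * psi_hat r rho m sigma z)
             (Rbar_locally m_infty) (at_point a).

From Stdlib Require Import Reals Lra Psatz Classical FunctionalExtensionality.
From Coquelicot Require Import Coquelicot.
Open Scope R_scope.

(* Write A = θ - (r+ρ)c1, B = θ + (r+ρ)c2, w1 = m̂'φ̂ and w2 = m̂'ψ̂; the boundary equations are
     ∫_a^b (z-A) w1 = -(B-A) ∫_b^∞ w1   and   ∫_a^b (z-B) w2 = (B-A) ∫_{-∞}^a w2.
   Let (a,b) solve them for (A,B) and (a',b') for (A',B'), where A' ≤ A, B ≤ B', one strictly.
   Subtracting the two systems leaves
     ∫_{a'}^a (z-A) w1 + ∫_b^{b'} (z-B) w1 = -(A-A') ∫_{a'}^∞ w1 - (B'-B) ∫_{b'}^∞ w1 < 0,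
     ∫_{a'}^a (z-A) w2 + ∫_b^{b'} (z-B) w2 = (A-A') ∫_{-∞}^{a'} w2 + (B'-B) ∫_{-∞}^{b'} w2 > 0.
   The first integrals on the left have the sign of a' - a, the second ones that of b' - b,
   so if a' < a or b < b' fails then a ≤ a' and b' ≤ b; there, w1/w2 being nonincreasing, the
   two relations contradict each other.  The ratio is monotone because w2(x) = w1(2m - x) and
   w1(x) is a Gaussian times J(k(x - m)), where J(y) = ∫_0^∞ t^β e^{-t²/2 - yt} dt (the
   integral defining D_α) is nonincreasing in y. *)

Lemma ex_RInt_cont (f : R -> R) a b : (forall x, continuous f x) -> ex_RInt f a b.
Proof. intros Hf. apply (@ex_RInt_continuous R_CompleteNormedModule). intros; apply Hf. Qed.

Lemma continuous_of_ex_derive (f : R -> R) x : ex_derive f x -> continuous f x.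
Proof. apply (@ex_derive_continuous R_AbsRing R_NormedModule). Qed.

Lemma RInt_Chasles_cont (f : R -> R) a b c : (forall x, continuous f x) ->
  RInt f a c = RInt f a b + RInt f b c.
Proof. intros Hf. rewrite <- (RInt_Chasles f a b c); try apply ex_RInt_cont; auto. Qed.

Lemma RInt_swap_cont (f : R -> R) a b : (forall x, continuous f x) ->
  RInt f b a = - RInt f a b.
Proof. intros Hf. rewrite <- (opp_RInt_swap f a b); try apply ex_RInt_cont; auto. Qed.

Lemma RInt_scal_le (f g : R -> R) p q a b :
  (forall x, continuous f x) -> (forall x, continuous g x) -> a <= b ->
  (forall z, a < z < b -> p * f z <= q * g z) -> p * RInt f a b <= q * RInt g a b.
Proof.
  intros Hf Hg Hab H.
  rewrite <- !(RInt_scal (V := R_CompleteNormedModule)) by (apply ex_RInt_cont; auto).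
  apply RInt_le; auto; apply ex_RInt_cont; intros x.
  - apply (continuous_scal (fun _ => p) f); [apply continuous_const | auto].
  - apply (continuous_scal (fun _ => q) g); [apply continuous_const | auto].
Qed.

Lemma ln_le_sub_1 x : 0 < x -> ln x <= x - 1.
Proof. intros Hx. pose proof (exp_ineq1_le (ln x)) as H. rewrite exp_ln in H by exact Hx. lra. Qed.

Lemma exp_le_mono x y : x <= y -> exp x <= exp y.
Proof. intros [Hxy | ->]; [left; apply exp_increasing, Hxy | lra]. Qed.

Lemma exp_lipschitz u v : Rabs (exp u - exp v) <= Rabs (u - v) * exp (Rmax u v).
Proof.
  assert (Hle : forall p q, p <= q -> exp q - exp p <= (q - p) * exp q).
  { intros p q Hpq. pose proof (exp_ineq1_le (p - q)).
    replace (exp p) with (exp q * exp (p - q)) by (rewrite <- exp_plus; f_equal; ring).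
    pose proof (exp_pos q). nra. }
  destruct (Rle_or_lt u v) as [Huv | Huv].
  - pose proof (exp_le_mono u v Huv).
    rewrite Rmax_right, Rabs_left1, Rabs_left1 by lra.
    specialize (Hle u v Huv). lra.
  - pose proof (exp_le_mono v u (Rlt_le _ _ Huv)).
    rewrite Rmax_left, Rabs_pos_eq, Rabs_pos_eq by lra.
    specialize (Hle v u (Rlt_le _ _ Huv)). lra.
Qed.

Lemma continuous_of_lipschitz_at (g : R -> R) x0 C :
  (forall x, Rabs (x - x0) <= 1 -> Rabs (g x - g x0) <= C * Rabs (x - x0)) ->
  continuous g x0.
Proof.
  intros Hlip. apply filterlim_locally. intros eps.
  set (k := Rabs C + 1). pose proof (Rabs_pos C). pose proof (cond_pos eps).
  assert (Hd : 0 < Rmin 1 (eps / k))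
    by (apply Rmin_glb_lt; [lra | unfold k; apply Rdiv_lt_0_compat; lra]).
  exists (mkposreal _ Hd). intros x Hx. change (Rabs (x - x0) < Rmin 1 (eps / k)) in Hx.
  change (Rabs (g x - g x0) < eps).
  pose proof (Rmin_l 1 (eps / k)). pose proof (Rmin_r 1 (eps / k)).
  pose proof (Hlip x ltac:(lra)). pose proof (Rle_abs C). pose proof (Rabs_pos (x - x0)).
  assert (eps / k * k = eps) by (unfold k; field; lra).
  unfold k in *. nra.
Qed.

(** * Moments and the optimality system *)

Definition moment (w : R -> R) (c x y : R) : R := RInt (fun z => (z - c) * w z) x y.

Definition tail_pinfty (w : R -> R) (y : R) : R :=
  RInt_gen w (at_point y) (Rbar_locally p_infty).

Definition tail_minfty (w : R -> R) (x : R) : R :=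
  RInt_gen w (Rbar_locally m_infty) (at_point x).

Section Moments.

Variable w : R -> R.
Hypothesis w_cont : forall x, continuous w x.

Lemma moment_integrand_cont c x : continuous (fun z => (z - c) * w z) x.
Proof.
  apply (continuous_mult (fun z => z - c) w); auto.
  apply (continuous_minus (fun z => z) (fun _ => c));
    [apply continuous_id | apply continuous_const].
Qed.

Lemma moment_Chasles c x y u : moment w c x y = moment w c x u + moment w c u y.
Proof. apply RInt_Chasles_cont, moment_integrand_cont. Qed.

Lemma moment_swap c x y : moment w c y x = - moment w c x y.
Proof. apply RInt_swap_cont, moment_integrand_cont. Qed.

Lemma moment_shift c c' x y :
  moment w c' x y = moment w c x y + (c - c') * RInt w x y.
Proof.
  unfold moment.
  rewrite <- (RInt_scal (V := R_CompleteNormedModule)) by (apply ex_RInt_cont; auto).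
  rewrite <- (RInt_plus (V := R_CompleteNormedModule)).
  - apply RInt_ext; intros z _. change ((z - c') * w z = (z - c) * w z + (c - c') * w z). ring.
  - apply ex_RInt_cont, moment_integrand_cont.
  - apply ex_RInt_cont; intros z.
    apply (continuous_scal (fun _ => c - c') w); [apply continuous_const | auto].
Qed.

Hypothesis w_nonneg : forall x, 0 <= w x.

Lemma moment_nonpos c x y : x <= y -> y <= c -> moment w c x y <= 0.
Proof.
  intros Hxy Hyc.
  assert (H : 1 * moment w c x y <= 0 * RInt w x y).
  { apply RInt_scal_le; auto using moment_integrand_cont.
    intros z Hz. pose proof (w_nonneg z). nra. }
  lra.
Qed.

Lemma moment_nonneg c x y : c <= x -> x <= y -> 0 <= moment w c x y.
Proof.
  intros Hcx Hxy. apply RInt_ge_0; [exact Hxy | apply ex_RInt_cont, moment_integrand_cont |].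
  intros z Hz. apply Rmult_le_pos; [lra | apply w_nonneg].
Qed.

Hypothesis w_tail : forall y, ex_RInt_gen w (at_point y) (Rbar_locally p_infty).

Lemma tail_pinfty_Chasles x y : tail_pinfty w x = RInt w x y + tail_pinfty w y.
Proof.
  unfold tail_pinfty.
  rewrite <- (RInt_gen_Chasles (Fa := at_point x) (Fc := Rbar_locally p_infty) w y).
  - rewrite RInt_gen_at_point; [reflexivity | apply ex_RInt_cont; auto].
  - apply ex_RInt_gen_at_point, ex_RInt_cont; auto.
  - apply w_tail.
Qed.

Hypothesis w_tail_m : forall x, ex_RInt_gen w (Rbar_locally m_infty) (at_point x).

Lemma tail_minfty_Chasles x y : tail_minfty w y = tail_minfty w x + RInt w x y.
Proof.
  unfold tail_minfty.
  rewrite <- (RInt_gen_Chasles (Fa := Rbar_locally m_infty) (Fc := at_point y) w x).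
  - rewrite (RInt_gen_at_point w x y); [reflexivity | apply ex_RInt_cont; auto].
  - apply w_tail_m.
  - apply ex_RInt_gen_at_point, ex_RInt_cont; auto.
Qed.

End Moments.

Definition optimality_system (w1 w2 : R -> R) (A B a b : R) : Prop :=
  a < A /\ B < b /\
  moment w1 A a b = - (B - A) * tail_pinfty w1 b /\
  moment w2 B a b = (B - A) * tail_minfty w2 a.

Lemma weighted_tails_pos (T : R -> R) A A' B B' a' b' :
  (forall y, 0 < T y) -> A' <= A -> B <= B' -> A' < A \/ B < B' ->
  0 < (A - A') * T a' + (B' - B) * T b'.
Proof.
  intros HT HA HB Hstrict. pose proof (HT a'). pose proof (HT b').
  destruct Hstrict; nra.
Qed.

Section ComparativeStatics.

Variables w1 w2 : R -> R.
Hypothesis w1_cont : forall x, continuous w1 x.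
Hypothesis w2_cont : forall x, continuous w2 x.
Hypothesis w1_pos : forall x, 0 < w1 x.
Hypothesis w2_pos : forall x, 0 < w2 x.
Hypothesis ratio_nonincreasing : forall x y, x <= y -> w1 y * w2 x <= w1 x * w2 y.
Hypothesis w1_tail : forall y, ex_RInt_gen w1 (at_point y) (Rbar_locally p_infty).
Hypothesis w2_tail : forall x, ex_RInt_gen w2 (Rbar_locally m_infty) (at_point x).
Hypothesis w1_tail_pos : forall y, 0 < tail_pinfty w1 y.
Hypothesis w2_tail_pos : forall x, 0 < tail_minfty w2 x.

Let w1_nonneg x : 0 <= w1 x := Rlt_le _ _ (w1_pos x).
Let w2_nonneg x : 0 <= w2 x := Rlt_le _ _ (w2_pos x).

Lemma optimality_system_difference_w1 A B A' B' a b a' b' :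
  optimality_system w1 w2 A B a b -> optimality_system w1 w2 A' B' a' b' ->
  moment w1 A a' a + moment w1 B b b' =
  - ((A - A') * tail_pinfty w1 a' + (B' - B) * tail_pinfty w1 b').
Proof.
  intros [_ [_ [E _]]] [_ [_ [E' _]]].
  rewrite (moment_shift w1 w1_cont A A') in E'.
  rewrite (moment_Chasles w1 w1_cont A a' b' a), (moment_Chasles w1 w1_cont A a b' b) in E'.
  rewrite (moment_shift w1 w1_cont B A b b') in E'.
  rewrite (tail_pinfty_Chasles w1 w1_cont w1_tail b b') in E.
  rewrite (tail_pinfty_Chasles w1 w1_cont w1_tail a' b').
  rewrite E in E'. lra.
Qed.

Lemma optimality_system_difference_w2 A B A' B' a b a' b' :
  optimality_system w1 w2 A B a b -> optimality_system w1 w2 A' B' a' b' ->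
  moment w2 A a' a + moment w2 B b b' =
  (A - A') * tail_minfty w2 a' + (B' - B) * tail_minfty w2 b'.
Proof.
  intros [_ [_ [_ E]]] [_ [_ [_ E']]].
  rewrite (moment_shift w2 w2_cont B B') in E'.
  rewrite (moment_Chasles w2 w2_cont B a' b' a), (moment_Chasles w2 w2_cont B a b' b) in E'.
  rewrite (moment_shift w2 w2_cont A B a' a) in E'.
  rewrite (tail_minfty_Chasles w2 w2_cont w2_tail a' a) in E.
  rewrite (tail_minfty_Chasles w2 w2_cont w2_tail a' b').
  rewrite E in E'. lra.
Qed.

Lemma moment_ratio_left c x y : x <= y -> y <= c ->
  w2 y * moment w1 c x y <= w1 y * moment w2 c x y.
Proof.
  intros Hxy Hyc. apply RInt_scal_le; auto using moment_integrand_cont.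
  intros z Hz. pose proof (ratio_nonincreasing z y (Rlt_le _ _ (proj2 Hz))). nra.
Qed.

Lemma moment_ratio_right c x y : c <= x -> x <= y ->
  w2 x * moment w1 c x y <= w1 x * moment w2 c x y.
Proof.
  intros Hcx Hxy. apply RInt_scal_le; auto using moment_integrand_cont.
  intros z Hz. pose proof (ratio_nonincreasing x z (Rlt_le _ _ (proj1 Hz))). nra.
Qed.

Lemma no_inward_shift A B a b a' b' :
  a <= a' -> a' <= A -> B <= b' -> b' <= b -> a' <= b' ->
  moment w1 A a' a + moment w1 B b b' <= 0 ->
  0 < moment w2 A a' a + moment w2 B b b' -> False.
Proof.
  intros Ha Ha' Hb' Hb Hab E1 E2.
  rewrite (moment_swap w1 w1_cont A a a'), (moment_swap w1 w1_cont B b' b) in E1.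
  rewrite (moment_swap w2 w2_cont A a a'), (moment_swap w2 w2_cont B b' b) in E2.
  pose proof (moment_nonpos w2 w2_cont w2_nonneg A a a' Ha Ha') as Hp2.
  pose proof (moment_ratio_left A a a' Ha Ha') as Hleft.
  pose proof (moment_ratio_right B b' b Hb' Hb) as Hright.
  set (p1 := moment w1 A a a') in *. set (p2 := moment w2 A a a') in *.
  set (q1 := moment w1 B b' b) in *. set (q2 := moment w2 B b' b) in *.
  pose proof (ratio_nonincreasing a' b' Hab) as Hratio.
  pose proof (w1_pos a'). pose proof (w2_pos a'). pose proof (w1_pos b'). pose proof (w2_pos b').
  (* The steps S1..S5 chain w2 a' * w2 b' * q1 strictly below itself. *)
  assert (S1 : w2 a' * (w2 b' * q1) <= w2 a' * (w1 b' * q2)) by (apply Rmult_le_compat_l; lra).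
  assert (S2 : w2 a' * w1 b' * q2 < w2 a' * w1 b' * - p2)
    by (apply Rmult_lt_compat_l; [apply Rmult_lt_0_compat |]; lra).
  assert (S3 : w1 b' * w2 a' * - p2 <= w1 a' * w2 b' * - p2) by (apply Rmult_le_compat_r; lra).
  assert (S4 : w2 b' * (w1 a' * - p2) <= w2 b' * (w2 a' * - p1)) by (apply Rmult_le_compat_l; lra).
  assert (S5 : w2 a' * w2 b' * - p1 <= w2 a' * w2 b' * q1)
    by (apply Rmult_le_compat_l; [apply Rmult_le_pos |]; lra).
  lra.
Qed.

Theorem optimality_system_monotone A B A' B' a b a' b' :
  A' <= A -> B <= B' -> A' < A \/ B < B' -> A' <= B' ->
  optimality_system w1 w2 A B a b -> optimality_system w1 w2 A' B' a' b' ->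
  a' < a /\ b < b'.
Proof.
  intros HA HB Hstrict HAB' S S'.
  pose proof (optimality_system_difference_w1 _ _ _ _ _ _ _ _ S S') as E1.
  pose proof (optimality_system_difference_w2 _ _ _ _ _ _ _ _ S S') as E2.
  pose proof (weighted_tails_pos _ _ _ _ _ a' b' w1_tail_pos HA HB Hstrict).
  pose proof (weighted_tails_pos _ _ _ _ _ a' b' w2_tail_pos HA HB Hstrict).
  destruct S as [Ha [Hb _]], S' as [Ha' [Hb' _]].
  split.
  - destruct (Rlt_or_le a' a) as [|Hle]; [assumption | exfalso].
    destruct (Rlt_or_le b b') as [Hlt|Hle'].
    + pose proof (moment_nonpos w1 w1_cont w1_nonneg A a a' Hle ltac:(lra)).
      pose proof (moment_nonneg w1 w1_cont w1_nonneg B b b' ltac:(lra) (Rlt_le _ _ Hlt)).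
      rewrite (moment_swap w1 w1_cont A a a') in E1. lra.
    + apply (no_inward_shift A B a b a' b'); lra.
  - destruct (Rlt_or_le b b') as [|Hle]; [assumption | exfalso].
    destruct (Rlt_or_le a' a) as [Hlt|Hle'].
    + pose proof (moment_nonpos w2 w2_cont w2_nonneg A a' a (Rlt_le _ _ Hlt) ltac:(lra)).
      pose proof (moment_nonneg w2 w2_cont w2_nonneg B b' b ltac:(lra) Hle).
      rewrite (moment_swap w2 w2_cont B b' b) in E2. lra.
    + apply (no_inward_shift A B a b a' b'); lra.
Qed.

End ComparativeStatics.

(** * Improper integrals *)

Lemma nondecreasing_bounded_cvg (g : R -> R) a M :
  (forall x y, a <= x -> x <= y -> g x <= g y) -> (forall x, a <= x -> g x <= M) ->
  exists L, filterlim g (Rbar_locally p_infty) (locally L) /\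
            forall x, a <= x -> g x <= L.
Proof.
  intros Hmono Hbnd.
  destruct (completeness (fun v => exists x, a <= x /\ v = g x)) as [L [Hub Hlub]].
  - exists M. intros v [x [Hx ->]]. auto.
  - exists (g a), a. split; [lra | reflexivity].
  - assert (Hle : forall x, a <= x -> g x <= L) by (intros x Hx; apply Hub; eauto).
    exists L. split; [| exact Hle].
    apply filterlim_locally. intros eps.
    destruct (classic (exists x0, a <= x0 /\ L - eps < g x0)) as [[x0 [Hx0 Hgx0]] | Hnone].
    + exists x0. intros x Hx. change (Rabs (g x - L) < eps).
      pose proof (Hmono x0 x Hx0 (Rlt_le _ _ Hx)). pose proof (Hle x ltac:(lra)).
      apply Rabs_def1; lra.
    + exfalso. assert (L <= L - eps).
      { apply Hlub. intros v [x [Hx ->]]. apply Rnot_lt_le. intros Hlt. apply Hnone; eauto. }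
      pose proof (cond_pos eps). lra.
Qed.

Lemma is_RInt_gen_of_cvg (f : R -> R) a (F : (R -> Prop) -> Prop) {FF : Filter F} L :
  (forall x, continuous f x) -> filterlim (fun x => RInt f a x) F (locally L) ->
  is_RInt_gen f (at_point a) F L.
Proof.
  intros Hf HL P HP.
  apply (Filter_prod _ _ _ (fun u => u = a) (fun v => P (RInt f a v))).
  - reflexivity.
  - exact (HL P HP).
  - intros u v -> Hv. exists (RInt f a v). split; [| exact Hv].
    apply (RInt_correct (V := R_CompleteNormedModule)), ex_RInt_cont; auto.
Qed.

Lemma RInt_exp_neg l a x : 0 < l ->
  RInt (fun t => exp (- (l * t))) a x = (exp (- (l * a)) - exp (- (l * x))) / l.
Proof.
  intros Hl. apply is_RInt_unique.
  replace ((exp (- (l * a)) - exp (- (l * x))) / l)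
    with (minus (- exp (- (l * x)) / l) (- exp (- (l * a)) / l))
    by (unfold minus, plus, opp; cbn; field; lra).
  apply (is_RInt_derive (V := R_CompleteNormedModule) (fun t => - exp (- (l * t)) / l)).
  - intros t _. auto_derive; [exact I | field; lra].
  - intros t _. apply continuous_of_ex_derive. auto_derive. exact I.
Qed.

Lemma exp_dominated_cvg (f : R -> R) a K l : 0 < l -> (forall x, continuous f x) ->
  (forall t, a <= t -> 0 <= f t <= K * exp (- (l * t))) ->
  exists L, is_RInt_gen f (at_point a) (Rbar_locally p_infty) L /\
            forall x, a <= x -> RInt f a x <= L.
Proof.
  intros Hl Hf Hdom.
  assert (HK : 0 <= K).
  { pose proof (Hdom a (Rle_refl a)). pose proof (exp_pos (- (l * a))). nra. }
  destruct (nondecreasing_bounded_cvg (RInt f a) a (K * (exp (- (l * a)) / l)))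
    as [L [HL Hle]].
  - intros x y Hx Hxy. rewrite (RInt_Chasles_cont f a x y Hf).
    assert (0 <= RInt f x y).
    { apply RInt_ge_0; [exact Hxy | apply ex_RInt_cont; auto |].
      intros z Hz. apply Hdom. lra. }
    lra.
  - intros x Hx.
    assert (H : 1 * RInt f a x <= K * RInt (fun t => exp (- (l * t))) a x).
    { apply RInt_scal_le; auto.
      - intros t. apply continuous_of_ex_derive. auto_derive. exact I.
      - intros z Hz. pose proof (Hdom z ltac:(lra)). lra. }
    rewrite RInt_exp_neg in H by exact Hl.
    assert (0 <= K * (exp (- (l * x)) / l)).
    { apply Rmult_le_pos; [exact HK |]. left. apply Rdiv_lt_0_compat; [apply exp_pos | exact Hl]. }
    unfold Rdiv in *. lra.
  - exists L. split; [exact (is_RInt_gen_of_cvg f a _ L Hf HL) | exact Hle].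
Qed.

Lemma exp_dominated_ex_RInt_gen (f : R -> R) a K l : 0 < l -> (forall x, continuous f x) ->
  (forall t, a <= t -> 0 <= f t <= K * exp (- (l * t))) ->
  ex_RInt_gen f (at_point a) (Rbar_locally p_infty).
Proof.
  intros Hl Hf Hdom. destruct (exp_dominated_cvg f a K l Hl Hf Hdom) as [L [HL _]].
  exists L; exact HL.
Qed.

Lemma exp_dominated_RInt_gen_pos (f : R -> R) a K l : 0 < l -> (forall x, continuous f x) ->
  (forall t, a <= t -> 0 <= f t <= K * exp (- (l * t))) -> (forall t, a < t -> 0 < f t) ->
  0 < RInt_gen f (at_point a) (Rbar_locally p_infty).
Proof.
  intros Hl Hf Hdom Hpos. destruct (exp_dominated_cvg f a K l Hl Hf Hdom) as [L [HL Hle]].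
  rewrite (is_RInt_gen_unique f L HL).
  assert (0 < RInt f a (a + 1)) by (apply RInt_gt_0; [lra | intros; apply Hpos; lra | auto]).
  pose proof (Hle (a + 1) ltac:(lra)). lra.
Qed.

Lemma RInt_gen_abs_le (f g : R -> R) a lf lg :
  (forall t, a <= t -> Rabs (f t) <= g t) ->
  is_RInt_gen f (at_point a) (Rbar_locally p_infty) lf ->
  is_RInt_gen g (at_point a) (Rbar_locally p_infty) lg -> Rabs lf <= lg.
Proof.
  intros Hfg Hf Hg.
  apply (RInt_gen_norm (V := R_CompleteNormedModule)
           (Fa := at_point a) (Fb := Rbar_locally p_infty) f g lf lg); [| | exact Hf | exact Hg].
  - apply (Filter_prod _ _ _ (fun u => u = a) (fun v => a < v)); [reflexivity | exists a; auto |].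
    intros u v -> Hv. cbn. lra.
  - apply (Filter_prod _ _ _ (fun u => u = a) (fun v => a < v)); [reflexivity | exists a; auto |].
    intros u v -> Hv x Hx. apply Hfg. cbn in Hx. lra.
Qed.

Lemma is_RInt_reflect (f : R -> R) c u a y :
  is_RInt f (c - a) (c - u) y -> is_RInt (fun x => f (c - x)) u a y.
Proof.
  intros Hy.
  pose proof (is_RInt_comp_lin f (-1) c a u y) as H.
  replace (-1 * a + c) with (c - a) in H by ring.
  replace (-1 * u + c) with (c - u) in H by ring.
  specialize (H Hy).
  apply is_RInt_swap, (is_RInt_scal _ _ _ (-1)) in H.
  replace y with (scal (-1) (opp y)) by (change (-1 * - y = y); ring).
  refine (is_RInt_ext _ _ _ _ _ _ H). intros x _.
  change (-1 * (-1 * f (-1 * x + c)) = f (c - x)).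
  replace (-1 * x + c) with (c - x) by ring. ring.
Qed.

Lemma is_RInt_gen_reflect (f : R -> R) c a L :
  is_RInt_gen f (at_point (c - a)) (Rbar_locally p_infty) L ->
  is_RInt_gen (fun x => f (c - x)) (Rbar_locally m_infty) (at_point a) L.
Proof.
  intros Hf P HP. destruct (Hf P HP) as [Qa Qb HQa [M HM] HQ].
  apply (Filter_prod _ _ _ (fun u => Qb (c - u)) (fun v => v = a)).
  - exists (c - M). intros u Hu. apply HM. lra.
  - reflexivity.
  - intros u v Hu ->. destruct (HQ (c - a) (c - u) HQa Hu) as [y [Hy HPy]].
    exists y. split; [apply is_RInt_reflect; exact Hy | exact HPy].
Qed.

(** * The parabolic cylinder integral *)

(* [t ^ b] for [t > 0], extended by [0]: Stdlib's [Rpower t b] is [1] for [t <= 0]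
   (as [ln t = 0] there), which would break continuity at [0]. *)
Definition rpow (b t : R) : R := if Rle_dec t 0 then 0 else Rpower t b.

Lemma rpow_Rpower b t : 0 < t -> rpow b t = Rpower t b.
Proof. intros Ht. unfold rpow. destruct (Rle_dec t 0); [lra | reflexivity]. Qed.

Lemma rpow_nonpos b t : t <= 0 -> rpow b t = 0.
Proof. intros Ht. unfold rpow. destruct (Rle_dec t 0); [reflexivity | lra]. Qed.

Lemma rpow_pos b t : 0 < t -> 0 < rpow b t.
Proof. intros Ht. rewrite rpow_Rpower by exact Ht. apply exp_pos. Qed.

Lemma rpow_nonneg b t : 0 <= rpow b t.
Proof.
  destruct (Rle_or_lt t 0) as [Ht | Ht].
  - rewrite rpow_nonpos by exact Ht. lra.
  - left. apply rpow_pos, Ht.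
Qed.

Lemma rpow_cont b t : 0 < b -> continuous (rpow b) t.
Proof.
  intros Hb. destruct (Rlt_or_le 0 t) as [Ht | [Ht | Ht]].
  - apply (continuous_ext_loc _ (fun y => exp (b * ln y))).
    + exists (mkposreal t Ht). intros y Hy. change (Rabs (y - t) < t) in Hy.
      apply Rabs_def2 in Hy. rewrite rpow_Rpower by lra. reflexivity.
    + apply continuous_of_ex_derive. auto_derive. exact Ht.
  - apply (continuous_ext_loc _ (fun _ => 0)); [| apply continuous_const].
    assert (Hd : 0 < - t) by lra. exists (mkposreal _ Hd). intros y Hy.
    change (Rabs (y - t) < - t) in Hy. apply Rabs_def2 in Hy.
    rewrite rpow_nonpos by lra. reflexivity.
  - subst t. apply filterlim_locally. intros eps.
    set (d := Rpower eps (/ b)).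
    assert (Hd : 0 < d) by apply exp_pos.
    exists (mkposreal d Hd). intros y Hy. change (Rabs (y - 0) < d) in Hy.
    change (Rabs (rpow b y - rpow b 0) < eps).
    rewrite (rpow_nonpos b 0), Rminus_0_r by lra. rewrite Rminus_0_r in Hy.
    pose proof (cond_pos eps) as Heps.
    destruct (Rle_or_lt y 0) as [Hy0 | Hy0].
    + rewrite rpow_nonpos, Rabs_R0 by exact Hy0. exact Heps.
    + rewrite rpow_Rpower, Rabs_pos_eq by (try (left; apply exp_pos); exact Hy0).
      rewrite Rabs_pos_eq in Hy by lra.
      replace (pos eps) with (Rpower d b)
        by (unfold d; rewrite Rpower_mult, Rinv_l, Rpower_1 by lra; reflexivity).
      apply Rlt_Rpower_l; lra.
Qed.

Lemma rpow_exp_bound b c : 0 < b -> 0 < c ->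
  exists C, forall t, 0 <= t -> rpow b t <= C * exp (c * t).
Proof.
  intros Hb Hc. exists (exp (b * (ln (b / c) - 1))). intros t [Ht | Ht].
  - rewrite rpow_Rpower by exact Ht. unfold Rpower. rewrite <- exp_plus.
    apply exp_le_mono.
    assert (Hsplit : ln t = ln (b / c) + ln (c * t / b)).
    { rewrite <- ln_mult by (apply Rdiv_lt_0_compat; nra). f_equal. field. lra. }
    pose proof (ln_le_sub_1 (c * t / b) ltac:(apply Rdiv_lt_0_compat; nra)).
    assert (b * ln (c * t / b) <= b * (c * t / b - 1)) by (apply Rmult_le_compat_l; lra).
    assert (b * (c * t / b - 1) = c * t - b) by (field; lra).
    rewrite Hsplit. nra.
  - subst t. rewrite rpow_nonpos by lra. left. apply Rmult_lt_0_compat; apply exp_pos.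
Qed.

Definition pc_kernel (b y t : R) : R := rpow b t * exp (- t ^ 2 / 2 - y * t).

Definition pc_int (b y : R) : R :=
  RInt_gen (pc_kernel b y) (at_point 0) (Rbar_locally p_infty).

Section ParabolicCylinderIntegral.

Variable b : R.
Hypothesis b_pos : 0 < b.

Lemma pc_kernel_cont y t : continuous (pc_kernel b y) t.
Proof.
  apply (continuous_mult (rpow b) (fun t => exp (- t ^ 2 / 2 - y * t))).
  - apply rpow_cont, b_pos.
  - apply continuous_of_ex_derive. auto_derive. exact I.
Qed.

Lemma pc_kernel_nonneg y t : 0 <= pc_kernel b y t.
Proof. apply Rmult_le_pos; [apply rpow_nonneg | left; apply exp_pos]. Qed.

Lemma pc_kernel_pos y t : 0 < t -> 0 < pc_kernel b y t.
Proof. intros Ht. apply Rmult_lt_0_compat; [apply rpow_pos, Ht | apply exp_pos]. Qed.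

Lemma pc_kernel_dominated y :
  exists K, forall t, 0 <= t -> 0 <= pc_kernel b y t <= K * exp (- (1 * t)).
Proof.
  destruct (rpow_exp_bound b 1 b_pos Rlt_0_1) as [C HC].
  exists (C * exp ((2 - y) ^ 2 / 2)). intros t Ht. split; [apply pc_kernel_nonneg |].
  unfold pc_kernel. pose proof (exp_pos (- t ^ 2 / 2 - y * t)).
  apply Rle_trans with (C * exp (1 * t) * exp (- t ^ 2 / 2 - y * t));
    [apply Rmult_le_compat_r; auto; lra |].
  assert (HC0 : 0 <= C).
  { pose proof (HC 0 (Rle_refl 0)) as HC0. rewrite rpow_nonpos in HC0 by lra.
    pose proof (exp_pos (1 * 0)). nra. }
  rewrite !Rmult_assoc, <- !exp_plus. apply Rmult_le_compat_l; [exact HC0 |].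
  apply exp_le_mono. pose proof (pow2_ge_0 (t - (2 - y))). nra.
Qed.

Lemma is_RInt_gen_pc_int y :
  is_RInt_gen (pc_kernel b y) (at_point 0) (Rbar_locally p_infty) (pc_int b y).
Proof.
  destruct (pc_kernel_dominated y) as [K HK].
  apply (RInt_gen_correct (V := R_CompleteNormedModule)).
  apply (exp_dominated_ex_RInt_gen _ 0 K 1); auto using pc_kernel_cont. exact Rlt_0_1.
Qed.

Lemma pc_int_pos y : 0 < pc_int b y.
Proof.
  destruct (pc_kernel_dominated y) as [K HK].
  apply (exp_dominated_RInt_gen_pos _ 0 K 1); auto using pc_kernel_cont, pc_kernel_pos.
  exact Rlt_0_1.
Qed.

Lemma pc_int_nonincreasing y1 y2 : y1 <= y2 -> pc_int b y2 <= pc_int b y1.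
Proof.
  intros Hy.
  apply Rle_trans with (Rabs (pc_int b y2)); [apply Rle_abs |].
  apply (RInt_gen_abs_le (pc_kernel b y2) (pc_kernel b y1) 0); [| apply is_RInt_gen_pc_int ..].
  intros t Ht. rewrite Rabs_pos_eq by apply pc_kernel_nonneg.
  apply Rmult_le_compat_l; [apply rpow_nonneg |]. apply exp_le_mono. nra.
Qed.

Lemma pc_kernel_lipschitz y y0 t : 0 <= t -> Rabs (y - y0) <= 1 ->
  Rabs (pc_kernel b y t - pc_kernel b y0 t) <= Rabs (y - y0) * pc_kernel b (y0 - 2) t.
Proof.
  intros Ht Hy. unfold pc_kernel.
  set (u := - t ^ 2 / 2 - y * t). set (v := - t ^ 2 / 2 - y0 * t).
  rewrite <- Rmult_minus_distr_l, Rabs_mult, (Rabs_pos_eq (rpow b t)) by apply rpow_nonneg.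
  pose proof (exp_lipschitz u v) as Hexp.
  replace (u - v) with (- ((y - y0) * t)) in Hexp by (unfold u, v; ring).
  rewrite Rabs_Ropp, Rabs_mult, (Rabs_pos_eq t Ht) in Hexp.
  assert (Hmax : Rmax u v <= - t ^ 2 / 2 + (1 - y0) * t).
  { pose proof (Rle_abs (y - y0)). pose proof (Rle_abs (- (y - y0))). rewrite Rabs_Ropp in *.
    unfold u, v. apply Rmax_lub; nra. }
  assert (Ht_exp : t <= exp t) by (pose proof (exp_ineq1_le t); lra).
  assert (Hbound : t * exp (Rmax u v) <= exp (- t ^ 2 / 2 - (y0 - 2) * t)).
  { replace (- t ^ 2 / 2 - (y0 - 2) * t) with (t + (- t ^ 2 / 2 + (1 - y0) * t)) by ring.
    rewrite exp_plus. apply Rmult_le_compat; auto; [left; apply exp_pos |].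
    apply exp_le_mono, Hmax. }
  pose proof (rpow_nonneg b t). pose proof (Rabs_pos (y - y0)).
  apply Rle_trans with (rpow b t * (Rabs (y - y0) * t * exp (Rmax u v)));
    [apply Rmult_le_compat_l; assumption |].
  assert (0 <= rpow b t * Rabs (y - y0) *
               (exp (- t ^ 2 / 2 - (y0 - 2) * t) - t * exp (Rmax u v)))
    by (apply Rmult_le_pos; [apply Rmult_le_pos |]; lra).
  lra.
Qed.

Lemma pc_int_lipschitz y y0 : Rabs (y - y0) <= 1 ->
  Rabs (pc_int b y - pc_int b y0) <= pc_int b (y0 - 2) * Rabs (y - y0).
Proof.
  intros Hy. rewrite Rmult_comm.
  apply (RInt_gen_abs_le (fun t => pc_kernel b y t - pc_kernel b y0 t)
           (fun t => Rabs (y - y0) * pc_kernel b (y0 - 2) t) 0).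
  - intros t Ht. apply pc_kernel_lipschitz; assumption.
  - apply (is_RInt_gen_minus (V := R_NormedModule)); apply is_RInt_gen_pc_int.
  - apply (is_RInt_gen_scal (V := R_NormedModule)), is_RInt_gen_pc_int.
Qed.

Lemma pc_int_cont y0 : continuous (pc_int b) y0.
Proof.
  apply (continuous_of_lipschitz_at _ _ (pc_int b (y0 - 2))). intros y. apply pc_int_lipschitz.
Qed.

End ParabolicCylinderIntegral.

(** * The Ornstein-Uhlenbeck weights *)

Lemma int_0_inf_ext (f g : R -> R) :
  (forall t, 0 < t -> f t = g t) -> ex_RInt_gen f (at_point 0) (Rbar_locally p_infty) ->
  int_0_inf g = RInt_gen f (at_point 0) (Rbar_locally p_infty).
Proof.
  intros Hfg Hf. unfold int_0_inf. symmetry. apply RInt_gen_ext; [| exact Hf].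
  apply (Filter_prod _ _ _ (fun u => u = 0) (fun v => 0 < v)); [reflexivity | exists 0; auto |].
  intros u v -> Hv x Hx. cbn in Hx. rewrite Rmin_left in Hx by lra. apply Hfg. lra.
Qed.

Lemma Gamma_fn_pos s : 1 < s -> 0 < Gamma_fn s.
Proof.
  intros Hs. set (f := fun t => rpow (s - 1) t * exp (- t)).
  assert (Hf : forall x, continuous f x).
  { intros x. apply (continuous_mult (rpow (s - 1)) (fun t => exp (- t))).
    - apply rpow_cont. lra.
    - apply continuous_of_ex_derive. auto_derive. exact I. }
  destruct (rpow_exp_bound (s - 1) (1 / 2) ltac:(lra) ltac:(lra)) as [C HC].
  assert (Hdom : forall t, 0 <= t -> 0 <= f t <= C * exp (- (1 / 2 * t))).
  { intros t Ht. unfold f. split.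
    - apply Rmult_le_pos; [apply rpow_nonneg | left; apply exp_pos].
    - replace (- (1 / 2 * t)) with (1 / 2 * t + - t) by field.
      rewrite exp_plus, <- Rmult_assoc.
      apply Rmult_le_compat_r; [left; apply exp_pos | apply HC, Ht]. }
  unfold Gamma_fn. rewrite (int_0_inf_ext f).
  - apply (exp_dominated_RInt_gen_pos f 0 C (1 / 2)); auto; [lra |].
    intros t Ht. apply Rmult_lt_0_compat; [apply rpow_pos, Ht | apply exp_pos].
  - intros t Ht. unfold f. rewrite rpow_Rpower by exact Ht. reflexivity.
  - apply (exp_dominated_ex_RInt_gen f 0 C (1 / 2)); auto; lra.
Qed.

Lemma D_pc_pc_int al y : al < -1 ->
  D_pc al y = exp (- y ^ 2 / 4) / Gamma_fn (- al) * pc_int (- al - 1) y.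
Proof.
  intros Hal. unfold D_pc. f_equal. rewrite (int_0_inf_ext (pc_kernel (- al - 1) y)).
  - reflexivity.
  - intros t Ht. unfold pc_kernel. rewrite rpow_Rpower by exact Ht. reflexivity.
  - exists (pc_int (- al - 1) y). apply is_RInt_gen_pc_int. lra.
Qed.

Section OrnsteinUhlenbeckWeights.

Variables r rho m sigma : R.
Hypothesis r_pos : 0 < r.
Hypothesis rho_pos : 0 < rho.
Hypothesis sigma_pos : 0 < sigma.

Definition ou_density (x : R) : R :=
  2 / sigma ^ 2 / Gamma_fn ((r + rho) / rho) * exp (- rho * (x - m) ^ 2 / sigma ^ 2).

Definition ou_scale (x : R) : R := (x - m) * sqrt (2 * rho) / sigma.

Definition ou_weight (x : R) : R := ou_density x * pc_int (r / rho) (ou_scale x).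

Let index_pos : 0 < r / rho := Rdiv_lt_0_compat _ _ r_pos rho_pos.

Lemma Gamma_fn_ou_pos : 0 < Gamma_fn ((r + rho) / rho).
Proof.
  apply Gamma_fn_pos. replace ((r + rho) / rho) with (1 + r / rho) by (field; lra). lra.
Qed.

Lemma ou_density_pos x : 0 < ou_density x.
Proof.
  pose proof Gamma_fn_ou_pos. pose proof (pow_lt sigma 2 sigma_pos).
  apply Rmult_lt_0_compat; [| apply exp_pos].
  apply Rdiv_lt_0_compat; [apply Rdiv_lt_0_compat |]; lra.
Qed.

Lemma ou_density_reflect x : ou_density (2 * m - x) = ou_density x.
Proof. unfold ou_density. do 3 f_equal. ring. Qed.

Lemma ou_scale_reflect x : ou_scale (2 * m - x) = - ou_scale x.
Proof. unfold ou_scale. field. lra. Qed.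

Lemma ou_scale_le x y : x <= y -> ou_scale x <= ou_scale y.
Proof.
  intros Hxy. unfold ou_scale, Rdiv.
  apply Rmult_le_compat_r; [left; apply Rinv_0_lt_compat, sigma_pos |].
  apply Rmult_le_compat_r; [apply sqrt_pos | lra].
Qed.

Lemma m_hat_d_mul_D_pc x s : s ^ 2 = ou_scale x ^ 2 ->
  m_hat_d rho m sigma x *
    (exp (rho * (x - m) ^ 2 / (2 * sigma ^ 2)) * D_pc (- (r + rho) / rho) s) =
  ou_density x * pc_int (r / rho) s.
Proof.
  intros Hs. pose proof Gamma_fn_ou_pos as HG.
  rewrite D_pc_pc_int by (apply (Rmult_lt_reg_r rho); [lra | field_simplify; lra]).
  replace (- (- (r + rho) / rho)) with ((r + rho) / rho) by (field; lra).
  replace ((r + rho) / rho - 1) with (r / rho) by (field; lra).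
  assert (Hgauss : exp (rho * (x - m) ^ 2 / (2 * sigma ^ 2)) * exp (- s ^ 2 / 4) = 1).
  { rewrite Hs, <- exp_plus, <- exp_0. f_equal. unfold ou_scale.
    replace (((x - m) * sqrt (2 * rho) / sigma) ^ 2)
      with ((x - m) ^ 2 * sqrt (2 * rho) ^ 2 / sigma ^ 2) by (field; lra).
    rewrite pow2_sqrt by lra. field. lra. }
  unfold m_hat_d, ou_density.
  transitivity (2 / sigma ^ 2 * exp (- rho * (x - m) ^ 2 / sigma ^ 2) *
    (exp (rho * (x - m) ^ 2 / (2 * sigma ^ 2)) * exp (- s ^ 2 / 4)) /
    Gamma_fn ((r + rho) / rho) * pc_int (r / rho) s); [field; lra |].
  rewrite Hgauss. field. lra.
Qed.

Lemma m_hat_d_phi_hat x : m_hat_d rho m sigma x * phi_hat r rho m sigma x = ou_weight x.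
Proof. apply m_hat_d_mul_D_pc. reflexivity. Qed.

Lemma m_hat_d_psi_hat x :
  m_hat_d rho m sigma x * psi_hat r rho m sigma x = ou_weight (2 * m - x).
Proof.
  unfold ou_weight. rewrite ou_density_reflect, ou_scale_reflect.
  apply m_hat_d_mul_D_pc. fold (ou_scale x). ring.
Qed.

Lemma ou_weight_pos x : 0 < ou_weight x.
Proof. apply Rmult_lt_0_compat; [apply ou_density_pos | apply pc_int_pos, index_pos]. Qed.

Lemma ou_weight_cont x : continuous ou_weight x.
Proof.
  apply (continuous_mult ou_density (fun x => pc_int (r / rho) (ou_scale x))).
  - apply continuous_of_ex_derive. unfold ou_density. auto_derive. exact I.
  - apply (continuous_comp ou_scale (pc_int (r / rho))).
    + apply continuous_of_ex_derive. unfold ou_scale. auto_derive. lra.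
    + apply pc_int_cont, index_pos.
Qed.

Lemma ou_weight_ratio x y : x <= y ->
  ou_weight y * ou_weight (2 * m - x) <= ou_weight x * ou_weight (2 * m - y).
Proof.
  intros Hxy. unfold ou_weight. rewrite !ou_density_reflect, !ou_scale_reflect.
  pose proof (ou_scale_le x y Hxy) as Hscale.
  pose proof (pc_int_nonincreasing _ index_pos _ _ Hscale).
  pose proof (pc_int_nonincreasing _ index_pos (- ou_scale y) (- ou_scale x) ltac:(lra)).
  pose proof (pc_int_pos _ index_pos (ou_scale y)).
  pose proof (pc_int_pos _ index_pos (- ou_scale x)).
  assert (Hprod : pc_int (r / rho) (ou_scale y) * pc_int (r / rho) (- ou_scale x) <=
                  pc_int (r / rho) (ou_scale x) * pc_int (r / rho) (- ou_scale y))
    by (apply Rmult_le_compat; lra).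
  pose proof (ou_density_pos x). pose proof (ou_density_pos y).
  assert (0 <= ou_density x * ou_density y) by (apply Rmult_le_pos; lra).
  nra.
Qed.

Lemma gaussian_exp_bound x :
  exp (- rho * (x - m) ^ 2 / sigma ^ 2) <= exp (sigma ^ 2 / (4 * rho) + m) * exp (- (1 * x)).
Proof.
  rewrite <- exp_plus. apply exp_le_mono.
  assert (0 <= rho / sigma ^ 2 * (x - m - sigma ^ 2 / (2 * rho)) ^ 2).
  { apply Rmult_le_pos; [| apply pow2_ge_0].
    left. apply Rdiv_lt_0_compat; [lra | apply pow_lt, sigma_pos]. }
  assert (sigma ^ 2 / (4 * rho) + m + - (1 * x) - - rho * (x - m) ^ 2 / sigma ^ 2 =
          rho / sigma ^ 2 * (x - m - sigma ^ 2 / (2 * rho)) ^ 2) by (field; lra).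
  lra.
Qed.

Lemma ou_weight_dominated y :
  exists K, forall t, y <= t -> 0 <= ou_weight t <= K * exp (- (1 * t)).
Proof.
  set (c := 2 / sigma ^ 2 / Gamma_fn ((r + rho) / rho)).
  exists (c * exp (sigma ^ 2 / (4 * rho) + m) * pc_int (r / rho) (ou_scale y)).
  intros t Hyt. split; [left; apply ou_weight_pos |].
  assert (Hc : 0 < c).
  { pose proof Gamma_fn_ou_pos. pose proof (pow_lt sigma 2 sigma_pos).
    apply Rdiv_lt_0_compat; [apply Rdiv_lt_0_compat |]; lra. }
  pose proof (gaussian_exp_bound t).
  pose proof (pc_int_nonincreasing _ index_pos _ _ (ou_scale_le y t Hyt)).
  pose proof (pc_int_pos _ index_pos (ou_scale t)).
  pose proof (exp_pos (- rho * (t - m) ^ 2 / sigma ^ 2)).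
  unfold ou_weight, ou_density. fold c.
  apply Rle_trans with (c * (exp (sigma ^ 2 / (4 * rho) + m) * exp (- (1 * t))) *
                        pc_int (r / rho) (ou_scale y)); [| right; ring].
  apply Rmult_le_compat; [apply Rmult_le_pos | | apply Rmult_le_compat_l |]; lra.
Qed.

Lemma is_RInt_gen_ou_weight y :
  is_RInt_gen ou_weight (at_point y) (Rbar_locally p_infty) (tail_pinfty ou_weight y).
Proof.
  destruct (ou_weight_dominated y) as [K HK].
  apply (RInt_gen_correct (V := R_CompleteNormedModule)).
  apply (exp_dominated_ex_RInt_gen _ y K 1); auto using ou_weight_cont. exact Rlt_0_1.
Qed.

Lemma ou_weight_tail_pos y : 0 < tail_pinfty ou_weight y.
Proof.
  destruct (ou_weight_dominated y) as [K HK].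
  apply (exp_dominated_RInt_gen_pos _ y K 1); auto using ou_weight_cont, ou_weight_pos.
  exact Rlt_0_1.
Qed.

Lemma is_RInt_gen_ou_weight_reflect x :
  is_RInt_gen (fun z => ou_weight (2 * m - z)) (Rbar_locally m_infty) (at_point x)
    (tail_pinfty ou_weight (2 * m - x)).
Proof. apply is_RInt_gen_reflect, is_RInt_gen_ou_weight. Qed.

Lemma ou_weight_reflect_tail x :
  tail_minfty (fun z => ou_weight (2 * m - z)) x = tail_pinfty ou_weight (2 * m - x).
Proof. exact (is_RInt_gen_unique _ _ (is_RInt_gen_ou_weight_reflect x)). Qed.

Theorem ou_optimality_system_monotone A B A' B' a b a' b' :
  A' <= A -> B <= B' -> A' < A \/ B < B' -> A' <= B' ->
  optimality_system ou_weight (fun z => ou_weight (2 * m - z)) A B a b ->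
  optimality_system ou_weight (fun z => ou_weight (2 * m - z)) A' B' a' b' ->
  a' < a /\ b < b'.
Proof.
  apply optimality_system_monotone.
  - exact ou_weight_cont.
  - intros x. apply (continuous_comp (fun z => 2 * m - z) ou_weight); [| apply ou_weight_cont].
    apply continuous_of_ex_derive. auto_derive. exact I.
  - exact ou_weight_pos.
  - intros x. apply ou_weight_pos.
  - exact ou_weight_ratio.
  - intros y. exists (tail_pinfty ou_weight y). apply is_RInt_gen_ou_weight.
  - intros x. exists (tail_pinfty ou_weight (2 * m - x)). apply is_RInt_gen_ou_weight_reflect.
  - exact ou_weight_tail_pos.
  - intros x. rewrite ou_weight_reflect_tail. apply ou_weight_tail_pos.
Qed.

Lemma OptBoundaries_optimality_system theta c1 c2 a b :
  OptBoundaries r rho m sigma theta c1 c2 a b ->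
  optimality_system ou_weight (fun z => ou_weight (2 * m - z))
    (theta - (r + rho) * c1) (theta + (r + rho) * c2) a b.
Proof.
  intros [Ha [Hb [E1 E2]]].
  assert (W1 : (fun z => m_hat_d rho m sigma z * phi_hat r rho m sigma z) = ou_weight)
    by (apply functional_extensionality, m_hat_d_phi_hat).
  assert (W2 : (fun z => m_hat_d rho m sigma z * psi_hat r rho m sigma z) =
               (fun z => ou_weight (2 * m - z)))
    by (apply functional_extensionality, m_hat_d_psi_hat).
  rewrite W1 in E1. rewrite W2 in E2.
  split; [lra | split; [lra | split]]; unfold moment, tail_pinfty, tail_minfty.
  - assert (Hf : forall z, (z - (theta - (r + rho) * c1)) * ou_weight z =
      (z - theta + (r + rho) * c1) * m_hat_d rho m sigma z * phi_hat r rho m sigma z)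
      by (intros z; rewrite <- m_hat_d_phi_hat; ring).
    rewrite (RInt_ext _ _ a b (fun z _ => Hf z)), E1. ring.
  - assert (Hf : forall z, (z - (theta + (r + rho) * c2)) * ou_weight (2 * m - z) =
      (z - theta - (r + rho) * c2) * m_hat_d rho m sigma z * psi_hat r rho m sigma z)
      by (intros z; rewrite <- m_hat_d_psi_hat; ring).
    rewrite (RInt_ext _ _ a b (fun z _ => Hf z)), E2. ring.
Qed.

End OrnsteinUhlenbeckWeights.

Theorem proposition4p3 (r rho m sigma theta : R) :
  0 < r -> 0 < rho -> 0 < sigma ->
  (* monotonicity in c1 (c2 fixed) *)
  (forall c1 c1' c2 a b a' b',
     0 < c1 + c2 -> 0 < c1' + c2 -> c1 < c1' ->
     OptBoundaries r rho m sigma theta c1 c2 a b ->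
     OptBoundaries r rho m sigma theta c1' c2 a' b' ->
     a' < a /\ b < b') /\
  (* monotonicity in c2 (c1 fixed) *)
  (forall c1 c2 c2' a b a' b',
     0 < c1 + c2 -> 0 < c1 + c2' -> c2 < c2' ->
     OptBoundaries r rho m sigma theta c1 c2 a b ->
     OptBoundaries r rho m sigma theta c1 c2' a' b' ->
     a' < a /\ b < b').
Proof.
  intros Hr Hrho Hsigma.
  pose proof (ou_optimality_system_monotone r rho m sigma Hr Hrho Hsigma) as Hmono.
  pose proof (OptBoundaries_optimality_system r rho m sigma Hr Hrho Hsigma theta) as Hsys.
  split.
  - intros c1 c1' c2 a b a' b' _ Hc' Hc1 Opt Opt'.
    apply (Hmono (theta - (r + rho) * c1) (theta + (r + rho) * c2)
                 (theta - (r + rho) * c1') (theta + (r + rho) * c2));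
      [nra | lra | left; nra | nra | apply Hsys; assumption ..].
  - intros c1 c2 c2' a b a' b' _ Hc' Hc2 Opt Opt'.
    apply (Hmono (theta - (r + rho) * c1) (theta + (r + rho) * c2)
                 (theta - (r + rho) * c1) (theta + (r + rho) * c2'));
      [lra | nra | right; nra | nra | apply Hsys; assumption ..].
Qed.
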